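(* For each integer $q\ge2$, let $\rho_q$ be the unique number in $(0,1)$ satisfying $\rho_q+\rho_q^2+\dots+\rho_q^{q-1}=\frac{q-1}{3}(1+2\rho_q^q)$, and let $\gamma_q:=\ln(1-\rho_q^q)-\ln(1-\rho_q)-\frac{q-1}{3}\ln(\rho_q)$. Then $\lim_{q\to\infty}\frac{\gamma_q}{\ln q}=1$. *)

From Stdlib Require Import Reals Lra ClassicalEpsilon.
From Coquelicot Require Import Coquelicot.
Open Scope R_scope.

Definition rho_eq (q : nat) (x : R) : Prop :=
  sum_n_m (fun i => x ^ i) 1 (q - 1) = (INR q - 1) / 3 * (1 + 2 * x ^ q).

Definition rho (q : nat) : R :=
  epsilon (inhabits 0) (fun x => 0 < x < 1 /\ rho_eq q x).

Definition gamma (q : nat) : R :=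
  ln (1 - rho q ^ q) - ln (1 - rho q) - (INR q - 1) / 3 * ln (rho q).

From Stdlib Require Import Reals Lra Lia Psatz ClassicalEpsilon.
From Coquelicot Require Import Coquelicot.
Open Scope R_scope.

(* Write q = n + 1 and e = 1 - rho_q. Multiplying the defining equation by
   3 (1 - rho_q) turns it into 3 (rho - rho^q) = n e (1 + 2 rho^q).  A
   second-order Bernoulli bound on (1 - e)^q shows that this forces n e >= 1/2,
   and the equation itself gives n e <= 3.  Hence e is of order 1/q, rho^q <= 2/3
   and (n/3) ln rho = O(n e) = O(1), so that
   gamma_q = ln q + ln (1 - rho^q) - ln (q e) - (n/3) ln rho = ln q + O(1).
   These bounds hold for every root in (0,1). *)

Lemma ln_le_sub_1 y : 0 < y -> ln y <= y - 1.
Proof.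
  intros Hy. pose proof (exp_ineq1_le (ln y)) as H.
  rewrite exp_ln in H; lra.
Qed.

Lemma Rabs_ln_le y c : 0 < y -> y <= 1 + c -> / y <= 1 + c -> Rabs (ln y) <= c.
Proof.
  intros Hy Hup Hinv.
  pose proof (ln_le_sub_1 y Hy).
  pose proof (ln_le_sub_1 (/ y) (Rinv_0_lt_compat _ Hy)) as Hln_inv.
  rewrite ln_Rinv in Hln_inv by lra.
  apply Rabs_le; lra.
Qed.

Lemma geometric_sum_mul_1_sub x m :
  sum_n_m (fun i => x ^ i) 1 m * (1 - x) = x - x ^ S m.
Proof.
  induction m as [|m IH].
  - rewrite sum_n_m_zero by lia. unfold zero; simpl. ring.
  - rewrite sum_n_Sm by lia. unfold plus; simpl in *.
    rewrite Rmult_plus_distr_r, IH. ring.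
Qed.

Lemma pow_1_sub_le_quadratic e m : 0 <= e <= 1 ->
  (1 - e) ^ m <= 1 - INR m * e + INR m * (INR m - 1) / 2 * e ^ 2.
Proof.
  intros He. induction m as [|m IH].
  - simpl. lra.
  - rewrite S_INR. simpl pow.
    assert (Hm : 0 <= INR m * (INR m - 1)).
    { destruct m; [simpl; lra|]. rewrite S_INR. pose proof (pos_INR m). nra. }
    assert (Hcube : 0 <= INR m * (INR m - 1) * (e * e * e)).
    { apply Rmult_le_pos; [lra|]. apply Rmult_le_pos; nra. }
    apply Rle_trans with ((1 - e) * (1 - INR m * e + INR m * (INR m - 1) / 2 * e ^ 2)).
    + apply Rmult_le_compat_l; lra.
    + simpl. nra.
Qed.

Lemma pow_1_sub_mul_1_add_le_1 e n : 0 <= e <= 1 ->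
  (1 - e) ^ n * (1 + INR n * e) <= 1.
Proof.
  intros He.
  apply Rle_trans with ((1 - e) ^ n * (1 + e) ^ n).
  - apply Rmult_le_compat_l; [apply pow_le; lra | apply Rle_pow_lin; lra].
  - rewrite <- Rpow_mult_distr.
    apply Rle_trans with (1 ^ n); [apply pow_incr; split; nra | rewrite pow1; lra].
Qed.

Definition rho_poly (n : nat) (x : R) : R :=
  3 * (x - x ^ S n) - INR n * (1 - x) * (1 + 2 * x ^ S n).

Lemma rho_eq_S_iff n x : x <> 1 -> rho_eq (S n) x <-> rho_poly n x = 0.
Proof.
  intros Hx. unfold rho_eq, rho_poly.
  replace (S n - 1)%nat with n by lia.
  rewrite S_INR. replace (INR n + 1 - 1) with (INR n) by ring.
  pose proof (geometric_sum_mul_1_sub x n) as Hsum.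
  set (s := sum_n_m (fun i => x ^ i) 1 n) in *.
  assert (Hne : 1 - x <> 0) by lra.
  split; intros H.
  - rewrite <- Hsum, H. field.
  - apply (Rmult_eq_reg_r (3 * (1 - x))); [|lra].
    replace (s * (3 * (1 - x))) with (3 * (s * (1 - x))) by ring.
    rewrite Hsum. lra.
Qed.

Lemma rho_poly_pos_near_1 n e : (1 <= n)%nat -> 0 < e -> INR n * e < / 2 ->
  0 < rho_poly n (1 - e).
Proof.
  intros Hn He Hne.
  assert (HnR : 1 <= INR n) by (apply (le_INR 1); lia).
  assert (He1 : e <= 1) by nra.
  pose proof (pow_1_sub_le_quadratic e (S n) ltac:(lra)) as Hpow.
  rewrite S_INR in Hpow.
  set (v := (1 - e) ^ S n) in *.
  set (B := 1 - (INR n + 1) * e + (INR n + 1) * (INR n + 1 - 1) / 2 * e ^ 2) in Hpow.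
  (* replacing v by its upper bound B in rho_poly n (1 - e) leaves
     n (n + 1) e^2 (1/2 - n e) > 0 *)
  assert (HB : B * (3 + 2 * INR n * e) - (3 - 3 * e - INR n * e)
               = INR n * (INR n + 1) * e ^ 2 * (INR n * e - / 2))
    by (unfold B; field).
  assert (Hmono : v * (3 + 2 * INR n * e) <= B * (3 + 2 * INR n * e))
    by (apply Rmult_le_compat_r; nra).
  assert (Hcoef : 0 < INR n * (INR n + 1) * e ^ 2)
    by (apply Rmult_lt_0_compat; [nra | apply pow_lt; lra]).
  unfold rho_poly. fold v. nra.
Qed.

Lemma rho_poly_root_bounds n x : (1 <= n)%nat -> 0 < x < 1 -> rho_poly n x = 0 ->
  / 2 <= INR n * (1 - x) <= 3.
Proof.
  intros Hn Hx Hroot.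
  assert (Hv : 0 < x ^ S n) by (apply pow_lt; lra).
  split.
  - destruct (Rlt_or_le (INR n * (1 - x)) (/ 2)) as [Hlt|]; [exfalso|lra].
    pose proof (rho_poly_pos_near_1 n (1 - x) Hn ltac:(lra) Hlt) as Hpos.
    replace (1 - (1 - x)) with x in Hpos by ring. lra.
  - unfold rho_poly in Hroot. nra.
Qed.

Lemma rho_eq_exists n : (1 <= n)%nat -> exists x, 0 < x < 1 /\ rho_eq (S n) x.
Proof.
  intros Hn.
  assert (HnR : 1 <= INR n) by (apply (le_INR 1); lia).
  set (e := / (4 * INR n)).
  assert (He : 0 < e <= / 4).
  { split; unfold e; [apply Rinv_0_lt_compat | apply Rinv_le_contravar]; lra. }
  assert (Hcont : continuity (rho_poly n)) by (unfold rho_poly; reg).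
  assert (H0 : rho_poly n 0 < 0) by (unfold rho_poly; rewrite pow_i by lia; lra).
  assert (H1 : 0 < rho_poly n (1 - e)).
  { apply rho_poly_pos_near_1; [lia | lra |].
    unfold e. field_simplify; lra. }
  destruct (IVT _ 0 (1 - e) Hcont ltac:(lra) H0 H1) as [x [Hx Hroot]].
  assert (x <> 0) by (intros ->; lra).
  exists x. split; [lra|].
  apply rho_eq_S_iff; lra.
Qed.

Lemma rho_spec n : (1 <= n)%nat -> 0 < rho (S n) < 1 /\ rho_poly n (rho (S n)) = 0.
Proof.
  intros Hn.
  assert (H : 0 < rho (S n) < 1 /\ rho_eq (S n) (rho (S n))).
  { unfold rho. apply epsilon_spec. now apply rho_eq_exists. }
  split; [apply H|]. apply (rho_eq_S_iff n); [lra | apply H].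
Qed.

Lemma gamma_S_sub_ln_bound n : (6 <= n)%nat ->
  Rabs (gamma (S n) - ln (INR (S n))) <= 7.
Proof.
  intros Hn.
  destruct (rho_spec n ltac:(lia)) as [Hx Hroot].
  pose proof (rho_poly_root_bounds n _ ltac:(lia) Hx Hroot) as Hne.
  set (x := rho (S n)) in *.
  assert (HnR : INR 6 <= INR n) by (apply le_INR; lia). simpl in HnR.
  assert (He : 1 - x <= / 2) by nra.
  assert (Hv : x ^ S n <= 2 / 3).
  { pose proof (pow_1_sub_mul_1_add_le_1 (1 - x) n ltac:(lra)) as Hpow.
    replace (1 - (1 - x)) with x in Hpow by ring.
    assert (0 <= x ^ n) by (apply pow_le; lra).
    simpl. nra. }
  assert (L1 : Rabs (ln (1 - x ^ S n)) <= 2).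
  { apply Rabs_ln_le; [lra | pose proof (pow_lt x (S n)); lra |].
    replace (1 + 2) with (/ / 3) by field. apply Rinv_le_contravar; lra. }
  assert (L2 : Rabs (ln (INR (S n) * (1 - x))) <= 5 / 2).
  { rewrite S_INR. apply Rabs_ln_le; [nra | nra |].
    apply Rle_trans with 2; [|lra].
    replace 2 with (/ / 2) by field. apply Rinv_le_contravar; nra. }
  assert (L3 : Rabs (INR n / 3 * ln x) <= 2).
  { assert (Hlnx : Rabs (ln x) <= 2 * (1 - x)).
    { apply Rabs_ln_le; [lra | lra |].
      apply (Rmult_le_reg_r x); [lra|]. rewrite Rinv_l by lra. nra. }
    rewrite Rabs_mult, (Rabs_pos_eq (INR n / 3)) by lra. nra. }
  assert (Hgamma : gamma (S n) - ln (INR (S n))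
                   = ln (1 - x ^ S n) - ln (INR (S n) * (1 - x)) - INR n / 3 * ln x).
  { unfold gamma. fold x. rewrite ln_mult by (rewrite ?S_INR; lra).
    rewrite S_INR. field. }
  rewrite Hgamma.
  apply Rabs_le_between in L1, L2, L3.
  apply Rabs_le_between. lra.
Qed.

Lemma is_lim_seq_div_of_bounded_sub (u v : nat -> R) (C : R) :
  is_lim_seq v p_infty -> eventually (fun n => Rabs (u n - v n) <= C) ->
  is_lim_seq (fun n => u n / v n) 1.
Proof.
  intros Hv Hbound.
  assert (HC : is_lim_seq (fun n => C * / v n) 0).
  { replace (Finite 0) with (Rbar_mult C (Rbar_inv p_infty)) by (simpl; f_equal; ring).
    apply is_lim_seq_scal_l, is_lim_seq_inv; [exact Hv | discriminate]. }
  apply is_lim_seq_le_le_loc with (fun n => 1 - C * / v n) (fun n => 1 + C * / v n).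
  - pose proof (proj2 (is_lim_seq_spec _ _) Hv 0) as Hpos.
    eapply filter_imp; [|apply filter_and; [exact Hbound | exact Hpos]].
    intros n [Hn Hvn]. simpl in Hvn.
    apply Rabs_le_between in Hn.
    replace (u n / v n) with (1 + (u n - v n) * / v n) by (field; lra).
    assert (0 < / v n) by (apply Rinv_0_lt_compat; lra).
    split; nra.
  - replace (Finite 1) with (Finite (1 - 0)) by (f_equal; ring).
    apply is_lim_seq_minus'; [apply is_lim_seq_const | exact HC].
  - replace (Finite 1) with (Finite (1 + 0)) by (f_equal; ring).
    apply is_lim_seq_plus'; [apply is_lim_seq_const | exact HC].
Qed.

Theorem mainTheorem6 :
  is_lim_seq (fun q : nat => gamma q / ln (INR q)) 1.
Proof.
  apply (is_lim_seq_div_of_bounded_sub _ _ 7).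
  - apply (is_lim_comp_seq ln INR p_infty p_infty is_lim_ln_p); [|exact is_lim_seq_INR].
    exists 0%nat. discriminate.
  - exists 7%nat. intros q Hq.
    destruct q as [|n]; [lia|].
    apply gamma_S_sub_ln_bound. lia.
Qed.
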